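(* Let $n,m\ge1$, let $K_n$ be the ordered complete graph on $n$ vertices, and let $P_m$ be a path on $m$ vertices with an arbitrary total order on its vertices. Then $R_o(K_n,P_m)\le 2^{\lceil\log_2 n\rceil\cdot(\lceil\log_2 m\rceil+1)}$.
   Context: An ordered graph is a graph with a total order $\prec$ on its vertices. An ordered graph $F$ is contained in an ordered graph $H$ if there is an injective map $V(F)\to V(H)$ preserving both the vertex order and adjacency. The ordered Ramsey number $R_o(F,G)$ is the smallest $N$ such that every red/blue colouring of the edges of the ordered complete graph $K_N$ contains a blue copy of $F$ or a red copy of $G$. *)

From mathcomp Require Import all_boot all_fingroup.
Set Implicit Arguments. Unset Strict Implicit. Unset Printing Implicit Defensive.

(* An ordered graph on k vertices: vertex set 'I_k with its natural order,
   adjacency given by a relation E (only pairs i < j are ever consulted). *)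

(* A red/blue colouring of the edges of the ordered complete graph K_N:
   the colour of the edge {a,b} with a < b is c a b (true = blue, false = red). *)
Definition colouring (N : nat) := 'I_N -> 'I_N -> bool.

Definition has_mono_copy (k : nat) (E : rel 'I_k) (N : nat) (c : colouring N)
    (col : bool) : Prop :=
  exists f : 'I_k -> 'I_N,
    (forall i j : 'I_k, i < j -> f i < f j) /\
    (forall i j : 'I_k, i < j -> E i j -> c (f i) (f j) = col).

(* N has the Ramsey property for (F, G): every colouring of K_N contains a
   blue copy of F or a red copy of G. R_o(F,G) is the least such N. *)
Definition ordered_ramsey_prop (k : nat) (F : rel 'I_k) (l : nat) (G : rel 'I_l)
    (N : nat) : Prop :=
  forall c : colouring N, has_mono_copy F c true \/ has_mono_copy G c false.

Definition complete_rel (n : nat) : rel 'I_n := fun i j => i != j.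

(* Path on m vertices with an arbitrary vertex order: the vertices 'I_m
   (naturally ordered) are visited along the path in the order given by the
   position permutation p (vertex v is at position p v); v,w adjacent iff
   their positions are consecutive. *)
Definition path_rel (m : nat) (p : {perm 'I_m}) : rel 'I_m :=
  fun v w => ((p v).+1 == p w) || ((p w).+1 == p v).

From mathcomp Require Import all_boot all_fingroup.
From mathcomp Require Import zify.
From Stdlib Require Import Classical.

(* Fix a colouring of K_N with no red copy of the ordered path P_m.  The key
   fact ([dense_cliques_double]) is a doubling step: if every set of L
   vertices contains a blue k-clique, then every set of m * 2L vertices
   contains a blue 2k-clique.  To see it, cut such a set S into m consecutive
   blocks of 2L vertices, one block per path position, assigned through the
   vertex order of the path.  If S had no blue 2k-clique, then walking along
   the path one can keep, in each block, L vertices that end a red walk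
   through the previous blocks ([red_walk], driven by the dichotomy
   [extend_or_double]); the walk is then a red copy of P_m, a contradiction.
   Iterating the step a times from the trivial case k = L = 1 gives blue
   2^a-cliques in every (2m)^a-set ([dense_cliques_pow]); with
   a = ceil(log2 n) and N = (2m)^a the whole of K_N holds a blue n-clique,
   which is a blue copy of K_n. *)

Set Implicit Arguments. Unset Strict Implicit. Unset Printing Implicit Defensive.

Lemma discrete_ivt (f : nat -> nat) (K t : nat) :
  f 0 = 0 -> (forall s, f s.+1 <= (f s).+1) -> K <= f t -> exists s, f s = K.
Proof.
move=> f0 fS; elim: t => [|t IH] Kt; first by exists 0; rewrite f0; lia.
have [/IH //|ltK] := leqP K (f t).
by exists t.+1; have := fS t; lia.
Qed.

Definition below (N : nat) (S : {set 'I_N}) (t : nat) : {set 'I_N} :=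
  S :&: [set x : 'I_N | x < t].

Lemma card_below_succ (N : nat) (S : {set 'I_N}) (t : nat) :
  #|below S t.+1| <= (#|below S t|).+1.
Proof.
have sub : below S t.+1 \subset below S t :|: [set x : 'I_N | val x == t].
  apply/subsetP => x; rewrite !inE ltnS leq_eqVlt => /andP[xS /orP[xt|->]].
    by rewrite xt orbT.
  by rewrite xS.
apply: leq_trans (subset_leq_card sub) _; rewrite -addn1.
rewrite cardsU; apply: leq_trans (leq_subr _ _) _; rewrite leq_add2l.
by apply/card_le1_eqP => x y; rewrite !inE => /eqP xt /eqP yt; apply: val_inj; rewrite xt yt.
Qed.

Lemma initial_segment (N : nat) (S : {set 'I_N}) (K : nat) :
  K <= #|S| -> exists t, #|below S t| = K.
Proof.
move=> KS; apply: (@discrete_ivt (fun t => #|below S t|) K N).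
- by apply: eq_card0 => x; rewrite !inE ltn0 andbF.
- exact: card_below_succ.
- by rewrite (_ : below S N = S) //; apply/setP => x; rewrite !inE ltn_ord andbT.
Qed.

Lemma consecutive_blocks (N K j : nat) (S : {set 'I_N}) : j * K <= #|S| ->
  exists A : nat -> {set 'I_N},
    (forall r, r < j -> A r \subset S /\ K <= #|A r|) /\
    (forall r r' (x y : 'I_N), r < r' -> r' < j -> x \in A r -> y \in A r' -> x < y).
Proof.
elim: j S => [|j IH] S hS.
  by exists (fun _ => set0); split => // r r' x y _; rewrite ltn0.
have [t Kt] : exists t, #|below S t| = K.
  by apply: initial_segment; apply: leq_trans hS; rewrite mulSn leq_addr.
have rest : j * K <= #|S :\: below S t|.
  move: (cardsID (below S t) S) hS; rewrite (setIidPr _) ?subsetIl // Kt mulSn.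
  by move=> <-; rewrite leq_add2l.
have [A [A_blocks A_sorted]] := IH _ rest.
exists (fun r => if r == 0 then below S t else A r.-1); split.
  case=> [|r] /= lt_rj; first by rewrite subsetIl Kt.
  have [sub ->] := A_blocks r lt_rj; split => //.
  exact: subset_trans sub (subsetDl _ _).
case=> [|r] [|r'] x y //= lt_rr' lt_r'j; last exact: A_sorted.
rewrite /below !inE => /andP[_ xt] yA.
have [sub _] := A_blocks r' lt_r'j.
move: (subsetP sub y yA); rewrite !inE => /andP[/nandP[/negP //|]].
by rewrite -leqNgt => ty _; apply: leq_trans xt ty.
Qed.

Lemma sorted_blocks_disjoint (N j : nat) (A : nat -> {set 'I_N}) (r r' : nat) :
  (forall r r' (x y : 'I_N), r < r' -> r' < j -> x \in A r -> y \in A r' -> x < y) ->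
  r < j -> r' < j -> r != r' -> [disjoint A r & A r'].
Proof.
move=> A_sorted rj r'j neq; rewrite -setI_eq0; apply/eqP/setP => x.
rewrite !inE; apply/negbTE/andP => -[xr xr'].
case: ltngtP neq => // [rr'|r'r] _.
  by have := A_sorted _ _ _ _ rr' r'j xr xr'; rewrite ltnn.
by have := A_sorted _ _ _ _ r'r rj xr' xr; rewrite ltnn.
Qed.

Section Colouring.
Variables (N : nat) (c : colouring N).

Definition edge_colour (x y : 'I_N) : bool := if x < y then c x y else c y x.

Lemma edge_colourC (x y : 'I_N) : edge_colour x y = edge_colour y x.
Proof.
by rewrite /edge_colour; case: ltngtP => // /val_inj->.
Qed.

Lemma edge_colour_lt (x y : 'I_N) : x < y -> edge_colour x y = c x y.
Proof. by rewrite /edge_colour => ->. Qed.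

Definition blue_clique (Q : {set 'I_N}) : Prop :=
  forall x y, x \in Q -> y \in Q -> x != y -> edge_colour x y.

Definition dense_cliques (k L : nat) : Prop :=
  forall S : {set 'I_N}, L <= #|S| ->
    exists2 Q : {set 'I_N}, Q \subset S & k <= #|Q| /\ blue_clique Q.

Lemma dense_cliques_1 : dense_cliques 1 1.
Proof.
move=> S /card_gt0P[x xS]; exists [set x]; first by rewrite sub1set.
by rewrite cards1; split => // y z; rewrite !inE => /eqP-> /eqP->; rewrite eqxx.
Qed.

Lemma blue_cliqueU (Q Q' : {set 'I_N}) :
  blue_clique Q -> blue_clique Q' -> [disjoint Q & Q'] ->
  (forall x y, x \in Q -> y \in Q' -> edge_colour x y) ->
  blue_clique (Q :|: Q') /\ #|Q :|: Q'| = #|Q| + #|Q'|.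
Proof.
move=> cliqueQ cliqueQ' disjQQ' blueQQ'.
split; last by rewrite cardsU (disjoint_setI0 disjQQ') cards0 subn0.
move=> x y; rewrite !inE => /orP[xQ|xQ'] /orP[yQ|yQ'] nxy.
- exact: cliqueQ.
- exact: blueQQ'.
- by rewrite edge_colourC; apply: blueQQ'.
- exact: cliqueQ'.
Qed.

Lemma extend_or_double (k L : nat) (B A : {set 'I_N}) :
  dense_cliques k L -> L <= #|B| -> 2 * L <= #|A| -> [disjoint B & A] ->
  (exists2 Q : {set 'I_N}, Q \subset B :|: A & 2 * k <= #|Q| /\ blue_clique Q) \/
  (exists2 B' : {set 'I_N}, B' \subset A & L <= #|B'| /\
     forall x, x \in B' -> exists2 y, y \in B & ~~ edge_colour y x).
Proof.
move=> dense LB LA BA.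
have [Q QB [kQ cliqueQ]] := dense _ LB.
pose C := [set x in A | [forall y in Q, edge_colour y x]].
have CA : C \subset A by apply/subsetP => x; rewrite inE => /andP[].
have [LC|ltCL] := leqP L #|C|.
  left; have [Q' Q'C [kQ' cliqueQ']] := dense _ LC.
  have disjQQ' : [disjoint Q & Q'].
    exact: disjointWl QB (disjointWr (subset_trans Q'C CA) BA).
  have blueQQ' x y : x \in Q -> y \in Q' -> edge_colour x y.
    by move=> xQ /(subsetP Q'C); rewrite inE => /andP[_ /forall_inP]; apply.
  have [cliqueU cardU] := blue_cliqueU cliqueQ cliqueQ' disjQQ' blueQQ'.
  exists (Q :|: Q'); last by rewrite cardU mul2n -addnn leq_add.
  by apply: setUSS => //; apply: subset_trans Q'C CA.
right; exists (A :\: C); first exact: subsetDl.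
split.
  by rewrite cardsD (setIidPr CA); move: LA; rewrite mul2n -addnn; lia.
move=> x; rewrite !inE => /andP[]; rewrite negb_and => /orP[/negP//|] + xA.
rewrite negb_forall_in => /existsP[y /andP[yQ red]].
by exists y => //; apply: (subsetP QB).
Qed.

Definition red_walk_to (W : nat -> {set 'I_N}) (i : nat) (x : 'I_N) : Prop :=
  exists g : nat -> 'I_N, [/\ g i = x, forall j, j <= i -> g j \in W j
                            & forall j, j < i -> ~~ edge_colour (g j) (g j.+1)].

Lemma red_walk_to0 (W : nat -> {set 'I_N}) (x : 'I_N) : x \in W 0 -> red_walk_to W 0 x.
Proof. by move=> xW; exists (fun=> x); split => // j; rewrite leqn0 => /eqP->. Qed.

Lemma red_walk_toS (W : nat -> {set 'I_N}) (i : nat) (x y : 'I_N) :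
  red_walk_to W i y -> x \in W i.+1 -> ~~ edge_colour y x -> red_walk_to W i.+1 x.
Proof.
move=> [g [gi gW gred]] xW yx.
exists (fun j => if j == i.+1 then x else g j); split; first by rewrite eqxx.
  move=> j le_ji; case: eqP => [->//|/eqP ne].
  by apply: gW; rewrite -ltnS ltn_neqAle ne.
move=> j lt_ji; rewrite (ltn_eqF lt_ji); case: eqP => [[->]|/eqP ne]; first by rewrite gi.
by apply: gred; rewrite ltn_neqAle -eqSS ne -ltnS.
Qed.

Section RedWalk.
Variables (k L h : nat) (W : nat -> {set 'I_N}).
Hypothesis dense : dense_cliques k L.
Hypothesis W_large : forall i, i <= h -> 2 * L <= #|W i|.
Hypothesis W_disjoint : forall i, i < h -> [disjoint W i & W i.+1].
Hypothesis no_clique : forall i, i < h ->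
  ~ exists2 Q : {set 'I_N}, Q \subset W i :|: W i.+1 & 2 * k <= #|Q| /\ blue_clique Q.

Lemma red_walk_ends (i : nat) : i <= h ->
  exists2 B : {set 'I_N}, B \subset W i &
    L <= #|B| /\ forall x, x \in B -> red_walk_to W i x.
Proof.
elim: i => [|i IH] le_ih.
  exists (W 0) => //; split; last exact: red_walk_to0.
  by apply: leq_trans (W_large (leq0n h)); rewrite leq_pmull.
have [B BW [LB Bwalk]] := IH (ltnW le_ih).
have BW' : [disjoint B & W i.+1] := disjointWl BW (W_disjoint le_ih).
have [[Q QW big]|[B' B'W [LB' B'red]]] :=
  extend_or_double dense LB (W_large le_ih) BW'.
  by case: (no_clique le_ih); exists Q => //; apply: subset_trans QW (setSU _ BW).
exists B' => //; split => // x xB'.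
have [y yB yx] := B'red x xB'.
exact: red_walk_toS (Bwalk y yB) (subsetP B'W x xB') yx.
Qed.

Lemma red_walk (Lpos : 0 < L) :
  exists g : nat -> 'I_N, (forall j, j <= h -> g j \in W j) /\
                          (forall j, j < h -> ~~ edge_colour (g j) (g j.+1)).
Proof.
have [B _ [LB Bwalk]] := red_walk_ends (leqnn h).
have /card_gt0P[x xB] := leq_trans Lpos LB.
by have [g [_ gW gred]] := Bwalk x xB; exists g.
Qed.
End RedWalk.
End Colouring.

Lemma clique_copy (n N : nat) (c : colouring N) (Q : {set 'I_N}) :
  blue_clique c Q -> n <= #|Q| -> has_mono_copy (@complete_rel n) c true.
Proof.
move=> cliqueQ nQ; rewrite -[n]muln1 in nQ.
have [A [A_blocks A_sorted]] := consecutive_blocks nQ.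
have /fin_all_exists[f fA] : forall i : 'I_n, exists x : 'I_N, x \in A i.
  by move=> i; have [_ /card_gt0P[x xA]] := A_blocks i (ltn_ord i); exists x.
have f_incr (i j : 'I_n) : i < j -> f i < f j.
  by move=> ij; apply: A_sorted ij (ltn_ord j) (fA i) (fA j).
exists f; split => // i j ij _; rewrite -edge_colour_lt ?f_incr //.
have fQ l : f l \in Q by have [sub _] := A_blocks l (ltn_ord l); apply: (subsetP sub).
by apply: cliqueQ; rewrite ?fQ // neq_ltn f_incr.
Qed.

Section PathCopy.
Variables (m N : nat) (p : {perm 'I_m.+1}) (c : colouring N).

Lemma path_copy (A : nat -> {set 'I_N}) (g : nat -> 'I_N) :
  (forall r r' (x y : 'I_N), r < r' -> r' < m.+1 -> x \in A r -> y \in A r' -> x < y) ->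
  (forall v : 'I_m.+1, g (p v) \in A v) ->
  (forall j, j < m -> ~~ edge_colour c (g j) (g j.+1)) ->
  has_mono_copy (path_rel p) c false.
Proof.
move=> A_sorted gA gred.
have f_incr (v w : 'I_m.+1) : v < w -> g (p v) < g (p w).
  by move=> vw; apply: A_sorted vw (ltn_ord w) (gA v) (gA w).
exists (fun v => g (p v)); split => // v w vw.
rewrite /path_rel => adj; rewrite -edge_colour_lt ?f_incr //.
case/orP: adj => /eqP pvw.
  by apply/negbTE; rewrite -pvw gred // -ltnS pvw.
by rewrite edge_colourC; apply/negbTE; rewrite -pvw gred // -ltnS pvw.
Qed.

Hypothesis no_red_path : ~ has_mono_copy (path_rel p) c false.

Lemma dense_cliques_double (k L : nat) : 0 < L ->
  dense_cliques c k L -> dense_cliques c (2 * k) (m.+1 * (2 * L)).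
Proof.
move=> Lpos dense S hS; apply: NNPP => noQ; apply: no_red_path.
have [A [A_blocks A_sorted]] := consecutive_blocks hS.
pose q (j : nat) : 'I_m.+1 := (p^-1)%g (inord j).
have qK (v : 'I_m.+1) : q (p v) = v by rewrite /q inord_val permK.
have q_inj i j : i <= m -> j <= m -> q i = q j -> i = j.
  by move=> im jm /perm_inj/(congr1 (@nat_of_ord _)); rewrite !inordK.
pose W j := A (q j).
have WS j : W j \subset S by have [] := A_blocks _ (ltn_ord (q j)).
have [g [gW gred]] : exists g : nat -> 'I_N, (forall j, j <= m -> g j \in W j) /\
    (forall j, j < m -> ~~ edge_colour c (g j) (g j.+1)).
  apply: (red_walk dense) Lpos => [i _|i im|i im [Q QW big]].
  - by have [] := A_blocks _ (ltn_ord (q i)).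
  - apply: sorted_blocks_disjoint A_sorted _ _ _; rewrite ?ltn_ord //.
    by apply/eqP => /val_inj/(q_inj _ _ (ltnW im) im)/n_Sn.
  - by apply: noQ; exists Q => //; apply: subset_trans QW _; rewrite subUset !WS.
apply: path_copy A_sorted _ gred => v.
by have := gW (p v) (ltn_ord (p v)); rewrite /W qK.
Qed.

Lemma dense_cliques_pow (a : nat) : dense_cliques c (2 ^ a) ((2 * m.+1) ^ a).
Proof.
elim: a => [|a IH]; first exact: dense_cliques_1.
rewrite [2 ^ a.+1]expnS [(2 * m.+1) ^ a.+1]expnS -mulnA mulnCA.
by apply: dense_cliques_double IH; rewrite expn_gt0.
Qed.
End PathCopy.

Theorem theoremt (n m : nat) (hn : 1 <= n) (hm : 1 <= m) (p : {perm 'I_m}) :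
  exists N : nat,
    N <= 2 ^ (up_log 2 n * (up_log 2 m).+1) /\
    ordered_ramsey_prop (@complete_rel n) (@path_rel m p) N.
Proof.
case: m hm p => // m _ p; set a := up_log 2 n.
exists ((2 * m.+1) ^ a); split.
  rewrite [a * _]mulnC expnM; case: a => [|a]; first by rewrite !expn0.
  by rewrite leq_exp2r // expnS leq_mul2l /= up_logP.
move=> c; have [red_path|no_red_path] := classic (has_mono_copy (path_rel p) c false).
  by right.
left; have := dense_cliques_pow no_red_path (a := a) (S := [set: _]).
rewrite cardsT card_ord => /(_ (leqnn _))[Q _ [bigQ cliqueQ]].
by apply: clique_copy cliqueQ _; apply: leq_trans bigQ; apply: up_logP.
Qed.
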